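(* Let $(P,\leqslant)$ be a conditionally-complete interpolating poset, let $P^* := \{x \in P : \exists\, y \in P,\ y \ll x\}$, and let $k: P^* \to P^*$ be given by $k(x) = \bigvee \{y \in P : y \ll x\}$ (supremum in $P$). Let $Q = k(P^* )$, let $\sim$ be the equivalence relation on $P^*$ defined by $x \sim y \iff k(x) = k(y)$, let $\Pi = P^*/\!\sim$ and $\pi: P^* \to \Pi$ the quotient map. Then $\pi(x) \mapsto k(x)$ is a well-defined bijection $f:\Pi \to Q$, so $Q$ is isomorphic to $\Pi$ when $\Pi$ is given the order transported from $Q$ via $f$; and with this order on $\Pi$, the quotient map $\pi: P^* \to \Pi$ is continuous for the Lawson topologies on $P^*$ and $\Pi$.
   Context: A poset is conditionally-complete if every nonempty subset bounded above has a supremum. A nonempty subset $D$ is directed if any two elements of $D$ have an upper bound in $D$. For $x,y \in P$, $x \ll y$ means: for every directed subset $D$ of $P$ bounded above with supremum $d_0$, $y \leqslant d_0$ implies $x \leqslant d$ for some $d \in D$. $P$ is interpolating if whenever $x \ll y$ there is $z \in P$ with $x \ll z \ll y$. The Lawson topology on a poset is the topology generated by the Scott-open sets (upper sets $U$ such that any directed set with supremum in $U$ meets $U$) together with the complements of principal upper sets $\uparrow x$. *)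

From Stdlib Require Import List.
Set Implicit Arguments.

Section Order.
Variables (T : Type) (le : T -> T -> Prop).

Definition partial_order : Prop :=
  (forall x, le x x) /\
  (forall x y, le x y -> le y x -> x = y) /\
  (forall x y z, le x y -> le y z -> le x z).

Definition upper_bound (A : T -> Prop) (u : T) : Prop := forall a, A a -> le a u.
Definition bounded_above (A : T -> Prop) : Prop := exists u, upper_bound A u.
Definition is_sup (A : T -> Prop) (s : T) : Prop :=
  upper_bound A s /\ forall u, upper_bound A u -> le s u.

Definition cond_complete : Prop :=
  forall A : T -> Prop, (exists a, A a) -> bounded_above A -> exists s, is_sup A s.

Definition directed (D : T -> Prop) : Prop :=
  (exists d, D d) /\
  forall a b, D a -> D b -> exists c, D c /\ le a c /\ le b c.

Definition way_below (x y : T) : Prop :=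
  forall (D : T -> Prop) (d0 : T), directed D -> bounded_above D -> is_sup D d0 ->
    le y d0 -> exists d, D d /\ le x d.

Definition interpolating : Prop :=
  forall x y, way_below x y -> exists z, way_below x z /\ way_below z y.

Definition scott_open (U : T -> Prop) : Prop :=
  (forall x y, U x -> le x y -> U y) /\
  (forall (D : T -> Prop) (d0 : T), directed D -> is_sup D d0 -> U d0 ->
     exists d, D d /\ U d).

Definition lawson_subbasic (S : T -> Prop) : Prop :=
  scott_open S \/ exists x, forall y, S y <-> ~ le x y.

Definition lawson_open (U : T -> Prop) : Prop :=
  forall x, U x -> exists l : list (T -> Prop),
    Forall lawson_subbasic l /\ (forall S, In S l -> S x) /\
    (forall y, (forall S, In S l -> S y) -> U y).

End Order.

Definition lawson_continuous {A B : Type} (leA : A -> A -> Prop) (leB : B -> B -> Prop)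
  (g : A -> B) : Prop :=
  forall V : B -> Prop, lawson_open leB V -> lawson_open leA (fun a => V (g a)).

Definition sub_le {T : Type} (le : T -> T -> Prop) (P : T -> Prop) (a b : {x : T | P x}) : Prop :=
  le (proj1_sig a) (proj1_sig b).

Definition in_Pstar {T : Type} (le : T -> T -> Prop) (x : T) : Prop :=
  exists y, way_below le y x.
Definition Pstar {T : Type} (le : T -> T -> Prop) := {x : T | in_Pstar le x}.

Definition Img {A B : Type} (k : A -> B) := {q : B | exists x, k x = q}.

(* quotient of A by x ~ y <-> k x = k y: the set of equivalence classes *)
Definition kclass {A B : Type} (k : A -> B) :=
  {S : A -> Prop | exists x, S = fun y => k y = k x}.
Definition kproj {A B : Type} (k : A -> B) (x : A) : kclass k :=
  exist _ (fun y => k y = k x) (ex_intro _ x eq_refl).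

Definition bijective_map {A B : Type} (f : A -> B) : Prop :=
  (forall a b, f a = f b -> a = b) /\ (forall q, exists a, f a = q).

(* The map k is monotone, satisfies k x <= x, and preserves directed suprema:
   if y << sup D, interpolation gives y << y' << sup D, so y' lies below some
   d in D and y <= k d.  Conditional completeness is what makes a supremum
   taken in P* a supremum in P.  Hence pi is Scott continuous.  For the other
   subbasic sets, k z </= k x yields by interpolation some w << z with w </= x,
   and the set { y | w </= y } is a Lawson neighbourhood of x that pi maps
   outside the principal upper set of pi z. *)
From Stdlib Require Import List Classical ClassicalEpsilon ProofIrrelevance.

Definition image_set {A B : Type} (g : A -> B) (D : A -> Prop) (b : B) : Prop :=
  exists a, D a /\ b = g a.

Section Lawson.
Context {T : Type} {le : T -> T -> Prop}.

Lemma lawson_open_of_subbasic_nbhd (U : T -> Prop) :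
  (forall x, U x -> exists S, lawson_subbasic le S /\ S x /\ forall y, S y -> U y) ->
  lawson_open le U.
Proof.
  intros HU x Hx. destruct (HU x Hx) as [S [HS [HSx HSU]]].
  exists (S :: nil). split; [|split].
  - constructor; [exact HS | constructor].
  - intros S' [<- | []]; exact HSx.
  - intros y Hy. apply HSU, Hy. left; reflexivity.
Qed.

Lemma lawson_open_ext {U V : T -> Prop} :
  lawson_open le U -> (forall x, U x <-> V x) -> lawson_open le V.
Proof.
  intros HU HUV x Vx. destruct (HU x (proj2 (HUV x) Vx)) as [l [Hl [Hx Hsub]]].
  exists l. split; [exact Hl | split; [exact Hx |]].
  intros y Hy. apply HUV, Hsub, Hy.
Qed.

Lemma scott_open_lawson_open {U : T -> Prop} : scott_open le U -> lawson_open le U.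
Proof.
  intros HU. apply lawson_open_of_subbasic_nbhd. intros x Hx.
  exists U. split; [left; exact HU | auto].
Qed.

Lemma lawson_open_inter (U V : T -> Prop) :
  lawson_open le U -> lawson_open le V -> lawson_open le (fun x => U x /\ V x).
Proof.
  intros HU HV x [Ux Vx].
  destruct (HU x Ux) as [l1 [Hl1 [Hx1 H1]]], (HV x Vx) as [l2 [Hl2 [Hx2 H2]]].
  exists (l1 ++ l2). split; [apply Forall_app; split; assumption | split].
  - intros S HS. apply in_app_iff in HS as [HS | HS]; [apply Hx1 | apply Hx2]; exact HS.
  - intros y Hy. split; [apply H1 | apply H2]; intros S HS; apply Hy, in_app_iff; auto.
Qed.

Lemma lawson_open_list_inter {I : Type} (F : I -> T -> Prop) (l : list I) :
  (forall i, In i l -> lawson_open le (F i)) ->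
  lawson_open le (fun x => forall i, In i l -> F i x).
Proof.
  induction l as [| i l IH]; intros Hl.
  - intros x _. exists nil. split; [constructor | split]; [intros S [] | intros y _ i []].
  - assert (Hopen : lawson_open le (fun x => F i x /\ forall j, In j l -> F j x)).
    { apply lawson_open_inter; [apply Hl; left; reflexivity |].
      apply IH. intros j Hj; apply Hl; right; exact Hj. }
    intros x Hx. destruct (Hopen x) as [l' [Hl' [Hx' Hsub]]].
    { split; [apply Hx; left | intros j Hj; apply Hx; right]; auto. }
    exists l'. split; [exact Hl' | split; [exact Hx' |]].
    intros y Hy j [<- | Hj]; [exact (proj1 (Hsub y Hy)) | exact (proj2 (Hsub y Hy) j Hj)].
Qed.

End Lawson.

Lemma lawson_continuous_of_subbasic {A B : Type} (leA : A -> A -> Prop)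
  (leB : B -> B -> Prop) (g : A -> B) :
  (forall S, lawson_subbasic leB S -> lawson_open leA (fun a => S (g a))) ->
  lawson_continuous leA leB g.
Proof.
  intros Hg V HV x Hx. destruct (HV (g x) Hx) as [l [Hl [Hin Hsub]]].
  assert (Hopen : lawson_open leA (fun a => forall S, In S l -> S (g a))).
  { apply lawson_open_list_inter. intros S HS. apply Hg.
    exact (proj1 (Forall_forall _ l) Hl S HS). }
  destruct (Hopen x Hin) as [l' [Hl' [Hx' Hsub']]].
  exists l'. split; [exact Hl' | split; [exact Hx' |]].
  intros y Hy. apply Hsub, Hsub', Hy.
Qed.

Lemma directed_image {A B : Type} {leA : A -> A -> Prop} {leB : B -> B -> Prop}
  {g : A -> B} {D : A -> Prop} :
  (forall x y, leA x y -> leB (g x) (g y)) ->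
  directed leA D -> directed leB (image_set g D).
Proof.
  intros Hmono [[d Hd] Hdir]. split; [exists (g d), d; auto |].
  intros a b [da [Hda ->]] [db [Hdb ->]].
  destruct (Hdir da db Hda Hdb) as [c [Hc [Hac Hbc]]].
  exists (g c). split; [exists c; auto | auto].
Qed.

Lemma scott_open_preimage {A B : Type} (leA : A -> A -> Prop) (leB : B -> B -> Prop)
  (g : A -> B) :
  (forall x y, leA x y -> leB (g x) (g y)) ->
  (forall D d0, directed leA D -> is_sup leA D d0 -> is_sup leB (image_set g D) (g d0)) ->
  forall U, scott_open leB U -> scott_open leA (fun a => U (g a)).
Proof.
  intros Hmono Hsup U [Hup Hdir]. split.
  - intros x y Hx Hxy. exact (Hup _ _ Hx (Hmono _ _ Hxy)).
  - intros D d0 HD Hd0 HU.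
    destruct (Hdir (image_set g D) (g d0) (directed_image Hmono HD) (Hsup D d0 HD Hd0) HU)
      as [b [[d [Hd ->]] Hb]].
    exists d; auto.
Qed.

Section WayBelow.
Context {T : Type} {le : T -> T -> Prop}.
Hypothesis Hpo : partial_order le.

Lemma way_below_le_trans {x y z} : way_below le x y -> le y z -> way_below le x z.
Proof.
  destruct Hpo as [_ [_ Htr]].
  intros Hxy Hyz D d0 HD Hb Hs Hz. apply (Hxy D d0 HD Hb Hs). eauto.
Qed.

Lemma way_below_le {x y} : way_below le x y -> le x y.
Proof.
  destruct Hpo as [Hrefl _].
  intros Hxy. destruct (Hxy (fun d => d = y) y) as [d [-> Hxd]]; auto.
  - split; [exists y; reflexivity |]. intros a b -> ->. exists y; auto.
  - exists y; intros a ->; auto.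
  - split; [intros a ->; auto | intros u Hu; apply Hu; reflexivity].
Qed.

Lemma in_Pstar_le {x y} : in_Pstar le x -> le x y -> in_Pstar le y.
Proof.
  intros [w Hw] Hxy. exists w. exact (way_below_le_trans Hw Hxy).
Qed.

End WayBelow.

Lemma is_sup_sub_upclosed {T : Type} {le : T -> T -> Prop} {S : T -> Prop} :
  partial_order le -> cond_complete le ->
  (forall x y, S x -> le x y -> S y) ->
  forall {D : {x | S x} -> Prop} {d0 : {x | S x}}, (exists d, D d) ->
  is_sup (sub_le le S) D d0 -> is_sup le (image_set (@proj1_sig _ _) D) (proj1_sig d0).
Proof.
  intros [_ [_ Htr]] Hcc Hup D d0 [d1 Hd1] [Hub Hlub]. split.
  - intros t [d [Hd ->]]. exact (Hub d Hd).
  - intros v Hv.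
    destruct (Hcc (image_set (@proj1_sig _ _) D) (ex_intro _ _ (ex_intro _ d1 (conj Hd1 eq_refl)))
      (ex_intro _ v Hv)) as [s [Hs Hsv]].
    assert (HSs : S s) by (apply (Hup (proj1_sig d1)); [exact (proj2_sig d1) | apply Hs; exists d1; auto]).
    apply Htr with s; [| exact (Hsv v Hv)].
    apply (Hlub (exist _ s HSs)). intros d Hd. apply Hs. exists d; auto.
Qed.

Section Quotient.
Context {A B : Type} (k : A -> B).

Lemma kclass_eq (a b : kclass k) : proj1_sig a = proj1_sig b -> a = b.
Proof. apply eq_sig_hprop. intros; apply proof_irrelevance. Qed.

Lemma kproj_surjective (a : kclass k) : exists x, kproj k x = a.
Proof.
  destruct a as [S [x HS]]. exists x. apply kclass_eq. simpl. symmetry; exact HS.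
Qed.

Definition kclass_rep (a : kclass k) : A :=
  proj1_sig (constructive_indefinite_description _ (proj2_sig a)).

Lemma kclass_repP (a : kclass k) : proj1_sig a = fun y => k y = k (kclass_rep a).
Proof.
  unfold kclass_rep. destruct (constructive_indefinite_description _ _) as [r Hr]. exact Hr.
Qed.

Definition kclass_to_img (a : kclass k) : Img k :=
  exist _ (k (kclass_rep a)) (ex_intro _ (kclass_rep a) eq_refl).

Lemma kclass_to_img_kproj x : proj1_sig (kclass_to_img (kproj k x)) = k x.
Proof.
  simpl. pose proof (f_equal (fun S => S x) (kclass_repP (kproj k x))) as E.
  simpl in E. symmetry. rewrite <- E. reflexivity.
Qed.

Lemma kclass_to_img_bijective : bijective_map kclass_to_img.
Proof.
  split.
  - intros a b E. apply kclass_eq. rewrite (kclass_repP a), (kclass_repP b).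
    apply (f_equal (@proj1_sig _ _)) in E. simpl in E. rewrite E. reflexivity.
  - intros [q [x Hx]]. exists (kproj k x).
    apply eq_sig_hprop; [intros; apply proof_irrelevance |].
    rewrite kclass_to_img_kproj. exact Hx.
Qed.

End Quotient.

Section Kernel.
Context {T : Type} {le : T -> T -> Prop}.
Hypotheses (Hpo : partial_order le) (Hcc : cond_complete le) (Hint : interpolating le).
Context {k : Pstar le -> T}.
Hypothesis Hk : forall x : Pstar le, is_sup le (fun y => way_below le y (proj1_sig x)) (k x).

Lemma le_k_of_way_below {x y} : way_below le y (proj1_sig x) -> le y (k x).
Proof. exact (proj1 (Hk x) y). Qed.

Lemma k_le x : le (k x) (proj1_sig x).
Proof. apply (proj2 (Hk x)). intros y Hy. exact (way_below_le Hpo Hy). Qed.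

Lemma way_below_k {x y} : way_below le y (proj1_sig x) -> way_below le y (k x).
Proof.
  intros Hy. destruct (Hint _ _ Hy) as [z [Hyz Hzx]].
  exact (way_below_le_trans Hpo Hyz (le_k_of_way_below Hzx)).
Qed.

Lemma k_in_Pstar x : in_Pstar le (k x).
Proof.
  destruct (proj2_sig x) as [y Hy]. exists y. exact (way_below_k Hy).
Qed.

Lemma k_le_k (x z : Pstar le) :
  (forall w, way_below le w (proj1_sig z) -> le w (proj1_sig x)) -> le (k z) (k x).
Proof.
  intros Hzx. apply (proj2 (Hk z)). intros w Hw.
  destruct (Hint _ _ Hw) as [w' [Hww' Hw'z]].
  exact (le_k_of_way_below (way_below_le_trans Hpo Hww' (Hzx w' Hw'z))).
Qed.

Lemma k_monotone {x y : Pstar le} : sub_le le (in_Pstar le) x y -> le (k x) (k y).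
Proof.
  intros Hxy. apply k_le_k. intros w Hw.
  apply (proj2 (proj2 Hpo)) with (proj1_sig x); [exact (way_below_le Hpo Hw) | exact Hxy].
Qed.

Lemma k_directed_sup_le {D : Pstar le -> Prop} {d0 : Pstar le} {u : T} :
  directed (sub_le le (in_Pstar le)) D -> is_sup (sub_le le (in_Pstar le)) D d0 ->
  (forall d, D d -> le (k d) u) -> le (k d0) u.
Proof.
  intros HD Hd0 Hu. apply (proj2 (Hk d0)). intros y Hy.
  destruct (Hint _ _ Hy) as [y' [Hyy' Hy'd0]].
  assert (HsupT := is_sup_sub_upclosed Hpo Hcc (fun x y => in_Pstar_le Hpo) (proj1 HD) Hd0).
  destruct (Hy'd0 _ _ (directed_image (leB := le) (g := @proj1_sig _ _) (fun a b H => H) HD)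
              (ex_intro _ _ (proj1 HsupT)) HsupT (proj1 Hpo _))
    as [t [[d [Hd ->]] Hy't]].
  apply (proj2 (proj2 Hpo)) with (k d); [| exact (Hu d Hd)].
  exact (le_k_of_way_below (way_below_le_trans Hpo Hyy' Hy't)).
Qed.

Let leQ (a b : kclass k) : Prop :=
  le (proj1_sig (kclass_to_img k a)) (proj1_sig (kclass_to_img k b)).

Lemma kproj_scott_open {U : kclass k -> Prop} :
  scott_open leQ U -> scott_open (sub_le le (in_Pstar le)) (fun x => U (kproj k x)).
Proof.
  assert (Hmono : forall x y, sub_le le (in_Pstar le) x y -> leQ (kproj k x) (kproj k y)).
  { intros x y Hxy. unfold leQ. rewrite !kclass_to_img_kproj. exact (k_monotone Hxy). }
  apply scott_open_preimage; [exact Hmono |].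
  intros D d0 HD Hd0. split.
  - intros b [d [Hd ->]]. exact (Hmono _ _ (proj1 Hd0 d Hd)).
  - intros u Hu. unfold leQ. rewrite kclass_to_img_kproj.
    apply (k_directed_sup_le HD Hd0). intros d Hd.
    pose proof (Hu (kproj k d) (ex_intro _ d (conj Hd eq_refl))) as Hdu.
    unfold leQ in Hdu. rewrite kclass_to_img_kproj in Hdu. exact Hdu.
Qed.

Lemma lawson_open_not_above_k (z : Pstar le) :
  lawson_open (sub_le le (in_Pstar le)) (fun x => ~ le (k z) (k x)).
Proof.
  destruct Hpo as [_ [_ Htr]].
  apply lawson_open_of_subbasic_nbhd. intros x Hzx.
  assert (Hw : exists w, way_below le w (proj1_sig z) /\ ~ le w (proj1_sig x)).
  { apply NNPP. intros Hn. apply Hzx, k_le_k. intros w Hw.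
    apply NNPP. intros Hwx. apply Hn. exists w; auto. }
  destruct Hw as [w [Hwz Hwx]].
  destruct (Hint _ _ Hwz) as [w' [Hww' Hw'z]].
  pose (p := exist (in_Pstar le) w' (ex_intro _ w Hww') : Pstar le).
  exists (fun y => ~ sub_le le (in_Pstar le) p y). split; [| split].
  - right. exists p. intros y; tauto.
  - intros Hw'x. apply Hwx. exact (Htr _ _ _ (way_below_le Hpo Hww') Hw'x).
  - intros y Hw'y Hzy. apply Hw'y. unfold sub_le; simpl.
    apply Htr with (k z); [exact (le_k_of_way_below Hw'z) |].
    exact (Htr _ _ _ Hzy (k_le y)).
Qed.

Lemma kproj_lawson_continuous :
  lawson_continuous (sub_le le (in_Pstar le)) leQ (kproj k).
Proof.
  apply lawson_continuous_of_subbasic. intros S [HS | [q HS]].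
  - exact (scott_open_lawson_open (kproj_scott_open HS)).
  - destruct (kproj_surjective _ q) as [z <-].
    apply (lawson_open_ext (lawson_open_not_above_k z)). intros x.
    rewrite HS. unfold leQ. rewrite !kclass_to_img_kproj. reflexivity.
Qed.

End Kernel.

Theorem proposition2p10 (T : Type) (le : T -> T -> Prop)
  (Hpo : partial_order le) (Hcc : cond_complete le) (Hint : interpolating le)
  (k : Pstar le -> T)
  (Hk : forall x : Pstar le, is_sup le (fun y => way_below le y (proj1_sig x)) (k x)) :
  (forall x : Pstar le, in_Pstar le (k x)) /\
  exists f : kclass k -> Img k,
    (forall x : Pstar le, proj1_sig (f (kproj k x)) = k x) /\
    bijective_map f /\
    lawson_continuous (sub_le le (in_Pstar le))
      (fun a b : kclass k => le (proj1_sig (f a)) (proj1_sig (f b)))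
      (kproj k).
Proof.
  split; [exact (k_in_Pstar Hpo Hint Hk) |].
  exists (kclass_to_img k). split; [exact (kclass_to_img_kproj k) |].
  split; [exact (kclass_to_img_bijective k) |].
  exact (kproj_lawson_continuous Hpo Hcc Hint Hk).
Qed.
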